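(* Let $n\geq 4$ and $m\geq 1$ be integers, let $K$ be an infinite field, and let $p(x_1,\ldots,x_m)\in K\langle x_1,\ldots,x_m\rangle$ be a noncommutative polynomial with zero constant term such that $\mathrm{ord}(p)=n-2$. Then $p(T_n(K))=T_n(K)^{(n-3)}$.
   Context: $T_n(K)$ denotes the algebra of $n\times n$ upper triangular matrices over $K$; $T_n(K)^{(t)}$ denotes the set of upper triangular matrices whose $(i,j)$ entries vanish whenever $j-i\leq t$ (so $T_n(K)^{(n-3)}$ consists of the matrices supported on the positions $(1,n-1),(2,n),(1,n)$). $p(T_n(K))=\{p(a_1,\ldots,a_m):a_i\in T_n(K)\}$. The order $\mathrm{ord}(p)$ is the least positive integer $r$ with $p(T_r(K))=\{0\}$ but $p(T_{r+1}(K))\neq\{0\}$ (with $T_1(K)=K$). *)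

From HB Require Import structures.
From mathcomp Require Import all_boot all_order all_algebra.
Set Implicit Arguments. Unset Strict Implicit. Unset Printing Implicit Defensive.
Import GRing.Theory.
Local Open Scope ring_scope.

(* A noncommutative polynomial p in K<x_1,...,x_m> is represented as a formal
   finite sum of terms c * x_{w_1} ... x_{w_k}, encoded as a list of pairs
   (c, w) with w : seq 'I_m a word in the variables (index i : 'I_m stands
   for x_{i+1}).  The empty word is the monomial 1. *)
Definition ncpoly (K : fieldType) (m : nat) := seq (K * seq 'I_m).

Definition const_term (K : fieldType) (m : nat) (p : ncpoly K m) : K :=
  \sum_(t <- p | t.2 == [::]) t.1.

Definition nceval (K : fieldType) (m n : nat) (p : ncpoly K m)
    (a : 'I_m -> 'M[K]_n) : 'M[K]_n :=
  \sum_(t <- p) t.1 *: \big[mulmx/1%:M]_(i <- t.2) a i.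

Definition upper_tri (K : fieldType) (n : nat) (A : 'M[K]_n) : Prop :=
  forall i j : 'I_n, (j < i)%N -> A i j = 0.

(* T_n(K)^(t): upper triangular matrices whose (i,j) entry vanishes whenever
   j - i <= t (as integers); equivalently whenever j <= i + t. *)
Definition upper_tri_t (K : fieldType) (n t : nat) (A : 'M[K]_n) : Prop :=
  forall i j : 'I_n, (j <= i + t)%N -> A i j = 0.

Definition vanishes_on_T (K : fieldType) (m : nat) (p : ncpoly K m) (r : nat)
    : Prop :=
  forall a : 'I_m -> 'M[K]_r, (forall k, upper_tri (a k)) -> nceval p a = 0.

(* ord(p) = r : r is the least positive integer with p(T_r) = {0} and
   p(T_{r+1}) <> {0}  (T_1(K) = 'M_1 = K) *)
Definition has_ord (K : fieldType) (m : nat) (p : ncpoly K m) (r : nat) : Prop :=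
  [/\ (0 < r)%N, vanishes_on_T p r, ~ vanishes_on_T p r.+1 &
      forall r', (0 < r')%N -> (r' < r)%N ->
        ~ (vanishes_on_T p r' /\ ~ vanishes_on_T p r'.+1)].

Definition in_image_T (K : fieldType) (m n : nat) (p : ncpoly K m)
    (A : 'M[K]_n) : Prop :=
  exists a : 'I_m -> 'M[K]_n, (forall k, upper_tri (a k)) /\ A = nceval p a.

Definition infinite_field (K : fieldType) : Prop :=
  ~ exists s : seq K, forall x : K, x \in s.

From mathcomp Require Import all_boot all_order all_algebra.
From mathcomp Require Import zify ring.
From Stdlib Require Import Classical.
Set Implicit Arguments. Unset Strict Implicit. Unset Printing Implicit Defensive.
Import GRing.Theory.
Local Open Scope ring_scope.

(* If p vanishes on T_{n-2}, restricting an evaluation on T_n to the principal block on the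
   indices i..j shows that p(T_n) lies in the band T_n^(n-3), whose only free entries are
   (1,n-1), (2,n) and (1,n).  Conversely, a nonzero value of p on T_{n-1} is a multiple of
   e_{1,n-1}; embedding T_{n-1} into T_n by omitting the index n, 1 or 2 places it at each of
   the three free positions.  Conjugating by upper triangular dilations and transvections
   rescales these entries and adds multiples of (1,n-1) or (2,n) to (1,n); finally, as K is
   infinite, interpolating linearly between two of the embeddings gives a value of p whose
   (1,n-1) and (2,n) entries are both nonzero.  Together these reach the whole band. *)

Section UpperTriangular.
Variable K : fieldType.

Lemma upper_tri0 n : upper_tri (0 : 'M[K]_n).
Proof. by move=> i j _; rewrite mxE. Qed.

Lemma upper_tri1 n : upper_tri (1%:M : 'M[K]_n).
Proof. by move=> i j lt_ji; rewrite mxE -val_eqE /= (gtn_eqF lt_ji). Qed.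

Lemma upper_triD n (A B : 'M[K]_n) : upper_tri A -> upper_tri B -> upper_tri (A + B).
Proof. by move=> uA uB i j lt_ji; rewrite mxE uA ?uB ?addr0. Qed.

Lemma upper_triN n (A : 'M[K]_n) : upper_tri A -> upper_tri (- A).
Proof. by move=> uA i j lt_ji; rewrite mxE uA ?oppr0. Qed.

Lemma upper_triZ n c (A : 'M[K]_n) : upper_tri A -> upper_tri (c *: A).
Proof. by move=> uA i j lt_ji; rewrite mxE uA ?mulr0. Qed.

Lemma upper_triM n (A B : 'M[K]_n) : upper_tri A -> upper_tri B -> upper_tri (A *m B).
Proof.
move=> uA uB i j lt_ji; rewrite mxE big1 // => l _.
have [lt_li | le_il] := ltnP l i; first by rewrite uA ?mul0r.
by rewrite uB ?mulr0 // (leq_trans lt_ji le_il).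
Qed.

Lemma upper_tri_prod m n (a : 'I_m -> 'M[K]_n) (w : seq 'I_m) :
  (forall i, upper_tri (a i)) -> upper_tri (\big[mulmx/1%:M]_(i <- w) a i).
Proof.
move=> ua; elim: w => [|i w IHw]; first by rewrite big_nil; apply: upper_tri1.
by rewrite big_cons; apply: upper_triM.
Qed.

Lemma upper_tri_nceval m n (p : ncpoly K m) (a : 'I_m -> 'M[K]_n) :
  (forall i, upper_tri (a i)) -> upper_tri (nceval p a).
Proof.
move=> ua; rewrite /nceval; elim: p => [|t p IHp]; first by rewrite big_nil; apply: upper_tri0.
by rewrite big_cons; apply/upper_triD/IHp/upper_triZ/upper_tri_prod.
Qed.

End UpperTriangular.

Section Evaluation.
Variables (K : fieldType) (m : nat) (p : ncpoly K m).

Lemma eq_nceval n (a b : 'I_m -> 'M[K]_n) : a =1 b -> nceval p a = nceval p b.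
Proof.
move=> eq_ab; apply: eq_bigr => t _; congr (_ *: _).
by apply: eq_bigr => i _.
Qed.

(* Only the empty word notices that h need not be unital. *)
Lemma nceval_morph r s (h : 'M[K]_r -> 'M[K]_s) (a : 'I_m -> 'M[K]_r) :
  linear h ->
  (forall X Y, upper_tri X -> upper_tri Y -> h (X *m Y) = h X *m h Y) ->
  (forall i, upper_tri (a i)) ->
  nceval p (fun i => h (a i)) = h (nceval p a) + const_term p *: (1%:M - h 1%:M).
Proof.
move=> hlin hM ua.
have h0 : h 0 = 0.
  have := hlin 1 0 0; rewrite !scale1r addr0 => h0_double.
  by apply: (addrI (h 0)); rewrite addr0 -h0_double.
have h_word w : w != [::] ->
    \big[mulmx/1%:M]_(i <- w) h (a i) = h (\big[mulmx/1%:M]_(i <- w) a i).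
  elim: w => // i [|j w] IHw _; first by rewrite !big_cons !big_nil !mulmx1.
  by rewrite big_cons IHw // [in RHS]big_cons hM //; apply: upper_tri_prod.
rewrite /nceval /const_term; elim: p => [|[c w] q IHq].
  by rewrite !big_nil h0 scale0r addr0.
rewrite !big_cons /= IHq hlin.
case: w h_word => [|i w] h_word /=; last by rewrite h_word // addrA.
rewrite !big_nil scalerDl [c *: (_ - _)]scalerBr; set A := c *: 1%:M; set B := c *: h 1%:M.
by rewrite (addrC B) -[RHS]addrA [B + _]addrA (addrC B) subrK addrCA.
Qed.

Lemma linear_mulmx_lr r s (L : 'M[K]_(s, r)) (R : 'M[K]_(r, s)) :
  linear (fun X : 'M[K]_r => L *m X *m R).
Proof. by move=> c X Y; rewrite mulmxDr mulmxDl -scalemxAr -scalemxAl. Qed.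

Lemma nceval_conj r s (L : 'M[K]_(s, r)) (R : 'M[K]_(r, s)) (a : 'I_m -> 'M[K]_r) :
  const_term p = 0 -> R *m L = 1%:M -> (forall i, upper_tri (a i)) ->
  nceval p (fun i => L *m a i *m R) = L *m nceval p a *m R.
Proof.
move=> p0 RL ua; rewrite (nceval_morph (linear_mulmx_lr L R)) // ?p0 ?scale0r ?addr0 //.
by move=> X Y _ _; rewrite !mulmxA -(mulmxA (L *m X) R) RL mulmx1.
Qed.

Lemma nceval0 n : nceval p (fun _ => 0 : 'M[K]_n) = const_term p *: 1%:M.
Proof.
have := @nceval_morph n n (fun _ => 0) (fun _ => 0).
rewrite subr0 add0r; apply=> [c X Y|X Y _ _|i]; last exact: upper_tri0.
  by rewrite scaler0 addr0.
by rewrite mulmx0.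
Qed.

End Evaluation.

Lemma lift_mono n (i : 'I_n) : {mono lift i : x y / (x <= y)%N}.
Proof. by move=> x y; apply: leq_bump2. Qed.

Section IndexMaps.
Variables (K : fieldType) (r s : nat) (f : 'I_r -> 'I_s).
Hypothesis f_inj : injective f.

Definition embed_mx (X : 'M[K]_r) : 'M[K]_s := (rowsub f 1%:M)^T *m X *m rowsub f 1%:M.

Lemma rowsub1_mul_tr : rowsub f 1%:M *m (rowsub f 1%:M)^T = 1%:M :> 'M[K]_r.
Proof.
rewrite trmx_mxsub trmx1 -mxsub_mul mul1mx.
by apply/matrixP => a b; rewrite !mxE (inj_eq f_inj).
Qed.

Lemma mxsub_rowsub1 (Y : 'M[K]_s) : mxsub f f Y = rowsub f 1%:M *m Y *m (rowsub f 1%:M)^T.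
Proof. by rewrite -[Y in LHS]mulmx1 mxsub_mul rowsubE trmx_mxsub trmx1. Qed.

Lemma embed_mxK (X : 'M[K]_r) : mxsub f f (embed_mx X) = X.
Proof.
by rewrite mxsub_rowsub1 /embed_mx !mulmxA rowsub1_mul_tr mul1mx -mulmxA rowsub1_mul_tr mulmx1.
Qed.

Lemma embed_delta_mx a b : embed_mx (delta_mx a b) = delta_mx (f a) (f b).
Proof.
have e_rowsub c : 'e_c *m rowsub f 1%:M = 'e_(f c) :> 'rV[K]_s.
  by rewrite -rowE; apply/rowP => j; rewrite !mxE eq_sym.
by rewrite /embed_mx -(mul_delta_mx (0 : 'I_1)) -trmx_delta mulmxA -trmx_mul e_rowsub
  -mulmxA e_rowsub trmx_delta mul_delta_mx.
Qed.

Lemma nceval_embed m (p : ncpoly K m) (a : 'I_m -> 'M[K]_r) :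
  const_term p = 0 -> (forall i, upper_tri (a i)) ->
  nceval p (fun i => embed_mx (a i)) = embed_mx (nceval p a).
Proof. by move=> p0 ua; apply: nceval_conj => //; apply: rowsub1_mul_tr. Qed.

Hypothesis f_mono : {mono f : a b / (a <= b)%N}.

Lemma upper_tri_embed (X : 'M[K]_r) : upper_tri X -> upper_tri (embed_mx X).
Proof.
move=> uX i j lt_ji; rewrite mxE big1 // => b _; rewrite mxE big_distrl big1 //= => a _.
rewrite !mxE; have [ei | _] := eqVneq (f a) i; last by rewrite !mul0r.
have [ej | _] := eqVneq (f b) j; last by rewrite mulr0.
by rewrite uX ?mulr0 ?mul0r // ltnNge -f_mono -ltnNge ei ej.
Qed.

Lemma upper_tri_mxsub (Y : 'M[K]_s) : upper_tri Y -> upper_tri (mxsub f f Y).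
Proof. by move=> uY a b lt_ba; rewrite mxE uY // ltnNge f_mono -ltnNge. Qed.

Hypothesis f_interval : forall a b (l : 'I_s), (f a <= l <= f b)%N -> l \in f @: 'I_r.

Lemma mxsubM_upper (X Y : 'M[K]_s) : upper_tri X -> upper_tri Y ->
  mxsub f f (X *m Y) = mxsub f f X *m mxsub f f Y.
Proof.
move=> uX uY; apply/matrixP => a b; rewrite !mxE.
under [RHS]eq_bigr do rewrite !mxE.
rewrite -(big_imset (fun l => X (f a) l * Y l (f b)) (in2W f_inj)) /= [RHS]big_mkcond /=.
apply: eq_bigr => l _.
case: ifP => // /negbT l_out.
have [lt_l | le_l] := ltnP l (f a); first by rewrite uX ?mul0r.
have [lt_r | le_r] := ltnP (f b) l; first by rewrite uY ?mulr0.
by move: l_out; rewrite (f_interval (a := a) (b := b)) ?le_l.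
Qed.

Lemma nceval_mxsub m (p : ncpoly K m) (a : 'I_m -> 'M[K]_s) :
  const_term p = 0 -> (forall i, upper_tri (a i)) ->
  nceval p (fun i => mxsub f f (a i)) = mxsub f f (nceval p a).
Proof.
move=> p0 ua; rewrite (nceval_morph p (h := mxsub f f)) ?p0 ?scale0r ?addr0 //.
  by move=> c X Y; apply/matrixP => i j; rewrite !mxE.
exact: mxsubM_upper.
Qed.

End IndexMaps.

Section ElementaryMatrices.
Variable K : fieldType.

Lemma sum_delta_mxl n p (a : 'I_p) (b : 'I_n) (F : 'I_n -> K) i :
  \sum_l delta_mx a b i l * F l = (i == a)%:R * F b.
Proof.
rewrite (bigD1 b) //= big1 ?addr0 => [|l /negbTE nlb]; first by rewrite mxE eqxx andbT.
by rewrite mxE nlb andbF mul0r.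
Qed.

Lemma sum_delta_mxr n p (a : 'I_n) (b : 'I_p) (F : 'I_n -> K) j :
  \sum_l F l * delta_mx a b l j = F a * (j == b)%:R.
Proof.
rewrite (bigD1 a) //= big1 ?addr0 => [|l /negbTE nla]; first by rewrite mxE eqxx.
by rewrite mxE nla mulr0.
Qed.

(* For [a = b] this is the dilation of index [a] by [1 + u]. *)
Definition elem_mx n (a b : 'I_n) (u : K) : 'M[K]_n := 1%:M + u *: delta_mx a b.

Lemma elem_mx_mul n (a b : 'I_n) u v :
  elem_mx a b v *m elem_mx a b u = elem_mx a b (u + v + v * u * (b == a)%:R).
Proof.
rewrite /elem_mx mulmxDl mul1mx mulmxDr mulmx1 -scalemxAl -scalemxAr mul_delta_mx_cond.
by rewrite -[delta_mx a b *+ _]scaler_nat !scalerA !scalerDl !addrA mulrA.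
Qed.

Lemma upper_tri_elem n (a b : 'I_n) u : (a <= b)%N -> upper_tri (elem_mx a b u).
Proof.
move=> le_ab; apply/upper_triD/upper_triZ; first exact: upper_tri1.
move=> i j lt_ji; rewrite mxE; have [ei | //] := eqVneq i a; have [ej | //] := eqVneq j b.
by move: lt_ji; rewrite ei ej ltnNge le_ab.
Qed.

Lemma elem_conjE n (a b : 'I_n) u v (M : 'M[K]_n) i j :
  (elem_mx a b u *m M *m elem_mx a b v) i j =
  M i j + u * (i == a)%:R * M b j + v * M i a * (j == b)%:R
  + u * v * (i == a)%:R * M b a * (j == b)%:R.
Proof.
rewrite /elem_mx mulmxDl mul1mx -scalemxAl mulmxDr mulmx1 -scalemxAr mulmxDl -scalemxAl.
rewrite !mxE !sum_delta_mxl !sum_delta_mxr mxE sum_delta_mxl.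
ring.
Qed.

Lemma band_delta_mx n (N : 'M[K]_n.+1) : (forall i j : 'I_n.+1, (j < i + n)%N -> N i j = 0) ->
  N = N ord0 ord_max *: delta_mx ord0 ord_max.
Proof.
move=> band; apply/matrixP => i j; rewrite !mxE.
have [/andP[/eqP-> /eqP->] | not_corner] := boolP ((i == ord0) && (j == ord_max)).
  by rewrite mulr1.
rewrite mulr0 band //.
by move: not_corner (ltn_ord i) (ltn_ord j); rewrite -!val_eqE /=; lia.
Qed.

End ElementaryMatrices.

Section Vanishing.
Variables (K : fieldType) (m : nat) (p : ncpoly K m).
Hypothesis p0 : const_term p = 0.

Lemma vanishes_on_T_le r k : vanishes_on_T p r -> (k <= r)%N -> vanishes_on_T p k.
Proof.
move=> van_r le_kr a ua; pose f := widen_ord le_kr.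
have f_inj : injective f by move=> c c' /(congr1 val) /= /val_inj.
rewrite -(embed_mxK (K := K) f_inj (nceval p a)) -nceval_embed // van_r.
  by apply/matrixP => i j; rewrite !mxE.
by move=> i; apply: upper_tri_embed.
Qed.

Lemma nceval_band r n (a : 'I_m -> 'M[K]_n) : vanishes_on_T p r ->
  (forall i, upper_tri (a i)) -> forall i j : 'I_n, (j < i + r)%N -> nceval p a i j = 0.
Proof.
move=> van_r ua i j lt_j.
have [lt_ji | le_ij] := ltnP j i; first exact: upper_tri_nceval.
have le_n : (i + (j - i).+1 <= n)%N by have := ltn_ord j; lia.
pose f (c : 'I_(j - i).+1) : 'I_n := widen_ord le_n (rshift i c).
have f_inj : injective f by move=> c c' /(congr1 val) /addnI /val_inj.
have f_mono : {mono f : c c' / (c <= c')%N} by move=> c c'; apply: leq_add2l.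
have f_interval c c' (l : 'I_n) : (f c <= l <= f c')%N -> l \in f @: 'I_(j - i).+1.
  move=> /andP[le_cl le_lc]; have lt_l : (l - i < (j - i).+1)%N.
    by move: le_cl le_lc (ltn_ord c'); rewrite /=; lia.
  by apply/imsetP; exists (Ordinal lt_l) => //; apply: val_inj; move: le_cl => /=; lia.
have -> : nceval p a i j = mxsub f f (nceval p a) ord0 ord_max.
  by rewrite mxE; congr (nceval p a _ _); apply: val_inj => /=; lia.
rewrite -nceval_mxsub // (vanishes_on_T_le van_r) ?mxE //; first by lia.
by move=> l; apply: upper_tri_mxsub.
Qed.

Lemma in_image_band r n (A : 'M[K]_n) :
  vanishes_on_T p r.+1 -> in_image_T p A -> upper_tri_t r A.
Proof. by move=> van_r [a [ua ->]] i j le_j; apply: (nceval_band van_r ua); lia. Qed.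

Lemma in_image_conj n (G H M : 'M[K]_n) : H *m G = 1%:M -> upper_tri G -> upper_tri H ->
  in_image_T p M -> in_image_T p (G *m M *m H).
Proof.
move=> HG uG uH [a [ua ->]]; exists (fun i => G *m a i *m H); split; last by rewrite nceval_conj.
by move=> i; apply/upper_triM/uH/upper_triM.
Qed.

Lemma in_image_elem_conj n (a b : 'I_n) u v (M : 'M[K]_n) : (a <= b)%N ->
  u + v + v * u * (b == a)%:R = 0 -> in_image_T p M ->
  in_image_T p (elem_mx a b u *m M *m elem_mx a b v).
Proof.
move=> le_ab uv0; apply: in_image_conj; try exact: upper_tri_elem.
by rewrite elem_mx_mul uv0 /elem_mx scale0r addr0.
Qed.

Lemma in_image0 n : in_image_T p (0 : 'M[K]_n).
Proof.
exists (fun _ => 0); split; first by move=> _; apply: upper_tri0.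
by rewrite nceval0 p0 scale0r.
Qed.

Lemma nonvanishing_delta r : vanishes_on_T p r -> ~ vanishes_on_T p r.+1 ->
  exists a : 'I_m -> 'M[K]_r.+1, exists2 c, c != 0 &
    (forall i, upper_tri (a i)) /\ nceval p a = c *: delta_mx ord0 ord_max.
Proof.
move=> van_r nvan.
have [a [ua pa_neq0]] : exists a : 'I_m -> 'M[K]_r.+1,
    (forall i, upper_tri (a i)) /\ nceval p a != 0.
  apply: NNPP => none; apply: nvan => a ua; apply/eqP/negP => pa_neq0.
  by apply: none; exists a; split => //; apply/negP.
have band := nceval_band van_r ua.
exists a, (nceval p a ord0 ord_max); last by split; last exact: band_delta_mx.
by apply: contraNneq pa_neq0 => c0; apply/eqP; rewrite (band_delta_mx band) c0 scale0r.
Qed.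

End Vanishing.

Section PolynomialFunctions.
Variable K : fieldType.

Definition polyfun (F : K -> K) := exists q : {poly K}, forall t, F t = q.[t].

Lemma eq_polyfun F G : F =1 G -> polyfun F -> polyfun G.
Proof. by move=> eFG [q Fq]; exists q => t; rewrite -eFG. Qed.

Lemma polyfunC c : polyfun (fun _ => c).
Proof. by exists c%:P => t; rewrite hornerC. Qed.

Lemma polyfunX : polyfun (fun t => t).
Proof. by exists 'X => t; rewrite hornerX. Qed.

Lemma polyfunD F G : polyfun F -> polyfun G -> polyfun (fun t => F t + G t).
Proof. by move=> [q Fq] [q' Gq']; exists (q + q') => t; rewrite hornerD Fq Gq'. Qed.

Lemma polyfunM F G : polyfun F -> polyfun G -> polyfun (fun t => F t * G t).
Proof. by move=> [q Fq] [q' Gq']; exists (q * q') => t; rewrite hornerM Fq Gq'. Qed.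

Lemma polyfun_sum (I : Type) (r : seq I) (F : I -> K -> K) :
  (forall i, polyfun (F i)) -> polyfun (fun t => \sum_(i <- r) F i t).
Proof.
move=> pF; elim: r => [|i r IHr].
  by apply: eq_polyfun (polyfunC 0) => t; rewrite big_nil.
by apply: eq_polyfun (polyfunD (pF i) IHr) => t; rewrite big_cons.
Qed.

Definition mx_polyfun n (M : K -> 'M[K]_n) := forall i j, polyfun (fun t => M t i j).

Lemma mx_polyfunC n (A : 'M[K]_n) : mx_polyfun (fun _ => A).
Proof. by move=> i j; apply: polyfunC. Qed.

Lemma mx_polyfunD n (M N : K -> 'M[K]_n) :
  mx_polyfun M -> mx_polyfun N -> mx_polyfun (fun t => M t + N t).
Proof.
by move=> pM pN i j; apply: eq_polyfun (polyfunD (pM i j) (pN i j)) => t; rewrite mxE.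
Qed.

Lemma mx_polyfunZ n (F : K -> K) (M : K -> 'M[K]_n) :
  polyfun F -> mx_polyfun M -> mx_polyfun (fun t => F t *: M t).
Proof. by move=> pF pM i j; apply: eq_polyfun (polyfunM pF (pM i j)) => t; rewrite mxE. Qed.

Lemma mx_polyfunM n (M N : K -> 'M[K]_n) :
  mx_polyfun M -> mx_polyfun N -> mx_polyfun (fun t => M t *m N t).
Proof.
move=> pM pN i j; apply: eq_polyfun (polyfun_sum (index_enum _) _) => [t|l].
  by rewrite mxE.
exact: polyfunM.
Qed.

Lemma mx_polyfun_nceval m n (p : ncpoly K m) (a : K -> 'I_m -> 'M[K]_n) :
  (forall i, mx_polyfun (a^~ i)) -> mx_polyfun (fun t => nceval p (a t)).
Proof.
move=> pa; have p_word w : mx_polyfun (fun t => \big[mulmx/1%:M]_(i <- w) a t i).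
  elim: w => [|i w IHw] r c.
    by apply: eq_polyfun (mx_polyfunC 1%:M r c) => t; rewrite big_nil.
  by apply: eq_polyfun (mx_polyfunM (pa i) IHw r c) => t; rewrite big_cons.
rewrite /nceval; elim: p => [|[c w] p IHp] i j.
  by apply: eq_polyfun (mx_polyfunC 0 i j) => t; rewrite big_nil.
apply: eq_polyfun (mx_polyfunD (mx_polyfunZ (polyfunC c) (p_word w)) IHp i j) => t.
by rewrite big_cons.
Qed.

Lemma infinite_field_uniq_seq N : infinite_field K -> exists s : seq K, uniq s /\ size s = N.
Proof.
move=> infK; elim: N => [|N [s [uniq_s size_s]]]; first by exists [::].
have [x x_notin_s] : exists x, x \notin s.
  apply: NNPP => all_in; apply: infK; exists s => x.
  by apply: NNPP => x_notin; apply: all_in; exists x; apply/negP.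
by exists (x :: s); rewrite /= x_notin_s uniq_s size_s.
Qed.

Lemma infinite_field_nonroot (q : {poly K}) :
  infinite_field K -> q != 0 -> exists t, ~~ root q t.
Proof.
move=> infK q_neq0; apply: NNPP => all_roots.
have [s [uniq_s size_s]] := infinite_field_uniq_seq (size q) infK.
have : all (root q) s.
  by apply/allP => t _; apply: NNPP => /negP nroot; apply: all_roots; exists t.
by move/(max_poly_roots q_neq0)/(_ uniq_s); rewrite size_s ltnn.
Qed.

Lemma polyfun_common_nonzero F G t1 t2 : infinite_field K ->
  polyfun F -> polyfun G -> F t1 != 0 -> G t2 != 0 -> exists t, F t != 0 /\ G t != 0.
Proof.
move=> infK [q Fq] [q' Gq'] Ft1 Gt2.
have q_neq0 : q != 0 by apply: contraNneq Ft1 => q0; rewrite Fq q0 horner0.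
have q'_neq0 : q' != 0 by apply: contraNneq Gt2 => q'0; rewrite Gq' q'0 horner0.
have [t] := infinite_field_nonroot infK (mulf_neq0 q_neq0 q'_neq0).
by rewrite /root hornerM mulf_eq0 negb_or -Fq -Gq' => /andP[]; exists t.
Qed.

End PolynomialFunctions.

Section Corners.
Variables (K : fieldType) (k : nat).

Lemma inord_eqE x y : (x < k.+4)%N -> (y < k.+4)%N -> (inord x == inord y :> 'I_k.+4) = (x == y).
Proof. by move=> lt_x lt_y; rewrite -val_eqE /= !inordK. Qed.

(* The entries (1,n-1), (2,n), (1,n) of the paper, for n = k + 4 and 0-based indices. *)
Definition corner (M : 'M[K]_k.+4) : K * K * K :=
  (M (inord 0) (inord k.+2), M (inord 1) (inord k.+3), M (inord 0) (inord k.+3)).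

Lemma band_eq_corner (A B : 'M[K]_k.+4) :
  upper_tri_t k.+1 A -> upper_tri_t k.+1 B -> corner A = corner B -> A = B.
Proof.
move=> bandA bandB [e02 e13 e03]; apply/matrixP => i j.
have [le_j | lt_j] := leqP j (i + k.+1); first by rewrite bandA ?bandB.
rewrite -[i]inord_val -[j]inord_val.
have [[-> ->] | [[-> ->] | [-> ->]]] : (i = 0 :> nat /\ j = k.+2 :> nat) \/
    (i = 0 :> nat /\ j = k.+3 :> nat) \/ (i = 1 :> nat /\ j = k.+3 :> nat).
  by move: (ltn_ord j) lt_j; lia.
all: by [].
Qed.

Lemma corner_scale_delta c (i j : 'I_k.+4) :
  corner (c *: delta_mx i j) =
  (c * ((inord 0 == i) && (inord k.+2 == j))%:R, c * ((inord 1 == i) && (inord k.+3 == j))%:R,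
   c * ((inord 0 == i) && (inord k.+3 == j))%:R).
Proof. by rewrite /corner !mxE. Qed.

Lemma corner_lift_max c :
  corner (c *: delta_mx (lift ord_max ord0) (lift ord_max ord_max)) = (c, 0, 0).
Proof.
rewrite corner_scale_delta -!val_eqE /= !inordK // /bump /= ltnn.
by rewrite add0n eqxx (gtn_eqF (ltnSn _)) mulr1n mulr0n mulr1 !mulr0.
Qed.

Lemma corner_lift0 c : corner (c *: delta_mx (lift ord0 ord0) (lift ord0 ord_max)) = (0, c, 0).
Proof.
rewrite corner_scale_delta -!val_eqE /= !inordK // /bump /=.
by rewrite add1n eqxx mulr1n mulr1 mulr0.
Qed.

Lemma corner_lift1 c :
  corner (c *: delta_mx (lift (inord 1) ord0) (lift (inord 1) ord_max)) = (0, 0, c).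
Proof.
rewrite corner_scale_delta -!val_eqE /= !inordK // /bump /=.
by rewrite add1n eqxx (ltn_eqF (ltnSn _)) mulr1n mulr0n mulr1 !mulr0.
Qed.

End Corners.

Section Image.
Variables (K : fieldType) (k m : nat) (p : ncpoly K m).
Hypotheses (p0 : const_term p = 0) (van : vanishes_on_T p k.+2).

Definition attained (t : K * K * K) := exists2 M : 'M[K]_k.+4, in_image_T p M & corner M = t.

Lemma attained0 : attained (0, 0, 0).
Proof. by exists 0; [apply: in_image0 | rewrite /corner !mxE]. Qed.

Lemma attained_scale0 al x y z : al != 0 -> attained (x, y, z) -> attained (al * x, y, al * z).
Proof.
move=> al0 [M imM [<- <- <-]].
exists (elem_mx (inord 0) (inord 0) (al - 1) *m M *m elem_mx (inord 0) (inord 0) (al^-1 - 1)).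
  by apply: in_image_elem_conj imM => //; rewrite eqxx mulr1; field.
by rewrite /corner !elem_conjE !inord_eqE //=; congr (_, _, _); ring.
Qed.

Lemma attained_scale1 al x y z : al != 0 -> attained (x, y, z) -> attained (x, al * y, z).
Proof.
move=> al0 [M imM [<- <- <-]].
exists (elem_mx (inord 1) (inord 1) (al - 1) *m M *m elem_mx (inord 1) (inord 1) (al^-1 - 1)).
  by apply: in_image_elem_conj imM => //; rewrite eqxx mulr1; field.
by rewrite /corner !elem_conjE !inord_eqE //=; congr (_, _, _); ring.
Qed.

Lemma attained_shear01 u x y z : attained (x, y, z) -> attained (x, y, z + u * y).
Proof.
move=> [M imM [<- <- <-]].
exists (elem_mx (inord 0) (inord 1) u *m M *m elem_mx (inord 0) (inord 1) (- u)).
  by apply: in_image_elem_conj imM; rewrite ?inordK // inord_eqE //= mulr0 addr0 subrr.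
have M12 : M (inord 1) (inord k.+2) = 0 by rewrite (in_image_band p0 van imM) ?inordK.
by rewrite /corner !elem_conjE !inord_eqE //= M12; congr (_, _, _); ring.
Qed.

Lemma attained_shear23 u x y z : attained (x, y, z) -> attained (x, y, z - u * x).
Proof.
move=> [M imM [<- <- <-]].
exists (elem_mx (inord k.+2) (inord k.+3) u *m M *m elem_mx (inord k.+2) (inord k.+3) (- u)).
  by apply: in_image_elem_conj imM; rewrite ?inordK // inord_eqE //= gtn_eqF // mulr0 addr0 subrr.
have M12 : M (inord 1) (inord k.+2) = 0 by rewrite (in_image_band p0 van imM) ?inordK.
rewrite /corner !elem_conjE !inord_eqE //= eqxx (ltn_eqF (ltnSn k.+2)) M12 mulr0n mulr1n.
by congr (_, _, _); ring.
Qed.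

Section CornerValue.
Variables (a : 'I_m -> 'M[K]_k.+3) (c : K).
Hypotheses (ua : forall i, upper_tri (a i)) (pa : nceval p a = c *: delta_mx ord0 ord_max).

Lemma nceval_embed_lift (i : 'I_k.+4) :
  nceval p (fun j => embed_mx (lift i) (a j)) = c *: delta_mx (lift i ord0) (lift i ord_max).
Proof.
rewrite nceval_embed ?pa //; last exact: lift_inj.
by rewrite -(embed_delta_mx K (lift i)) /embed_mx -scalemxAr -scalemxAl.
Qed.

Lemma upper_tri_embed_lift (i : 'I_k.+4) j : upper_tri (embed_mx (lift i) (a j)).
Proof. by apply: upper_tri_embed => //; apply: lift_mono. Qed.

Lemma attained_lift (i : 'I_k.+4) t :
  corner (c *: delta_mx (lift i ord0) (lift i ord_max)) = t -> attained t.
Proof.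
move=> <-; exists (c *: delta_mx (lift i ord0) (lift i ord_max)) => //.
by rewrite -nceval_embed_lift; exists (fun j => embed_mx (lift i) (a j)); split => // j;
  apply: upper_tri_embed_lift.
Qed.

Hypotheses (c_neq0 : c != 0) (infK : infinite_field K).

Lemma attained_xy : exists x y z, [/\ x != 0, y != 0 & attained (x, y, z)].
Proof.
pose E (i : 'I_k.+4) j := embed_mx (lift i) (a j).
pose line t j := E ord_max j + t *: (E ord0 j - E ord_max j).
have uline t j : upper_tri (line t j).
  by apply/upper_triD/upper_triZ/upper_triD/upper_triN; apply: upper_tri_embed_lift.
have pline : mx_polyfun (fun t => nceval p (line t)).
  apply: mx_polyfun_nceval => j; apply: (mx_polyfunD (mx_polyfunC _)).
  by apply: mx_polyfunZ; [apply: polyfunX | apply: mx_polyfunC].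
have x_line0 : nceval p (line 0) (inord 0) (inord k.+2) != 0.
  have -> : nceval p (line 0) = nceval p (E ord_max).
    by apply: eq_nceval => j; rewrite /line scale0r addr0.
  by rewrite nceval_embed_lift; have [-> _ _] := corner_lift_max k c.
have y_line1 : nceval p (line 1) (inord 1) (inord k.+3) != 0.
  have -> : nceval p (line 1) = nceval p (E ord0).
    by apply: eq_nceval => j; rewrite /line scale1r addrC subrK.
  by rewrite nceval_embed_lift; have [_ -> _] := corner_lift0 k c.
have [t [x_neq0 y_neq0]] := polyfun_common_nonzero infK (pline (inord 0) (inord k.+2))
  (pline (inord 1) (inord k.+3)) x_line0 y_line1.
by do 3!eexists; split; [exact: x_neq0 | exact: y_neq0 | exists (nceval p (line t)) => //;
  exists (line t)].
Qed.

Lemma attained_all t : attained t.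
Proof.
have div_neq0 (x y : K) : x != 0 -> y != 0 -> x / y != 0.
  by move=> x_neq0 y_neq0; rewrite mulf_neq0 ?invr_eq0.
case: t => [[x y] z].
have [-> | x_neq0] := eqVneq x 0; have [-> | y_neq0] := eqVneq y 0.
- have [-> | z_neq0] := eqVneq z 0; first exact: attained0.
  have := attained_scale0 (div_neq0 z c z_neq0 c_neq0) (attained_lift (corner_lift1 k c)).
  by rewrite mulr0 divfK.
- have := attained_scale1 (div_neq0 y c y_neq0 c_neq0) (attained_lift (corner_lift0 k c)).
  rewrite divfK // => /(attained_shear01 (z / y)).
  by rewrite add0r divfK.
- have := attained_scale0 (div_neq0 x c x_neq0 c_neq0) (attained_lift (corner_lift_max k c)).
  rewrite mulr0 divfK // => /(attained_shear23 (- (z / x))).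
  by rewrite mulNr opprK add0r divfK.
have [x0 [y0 [z0 [x0_neq0 y0_neq0 att0]]]] := attained_xy.
move: att0 => /(attained_scale0 (div_neq0 x x0 x_neq0 x0_neq0)).
move=> /(attained_scale1 (div_neq0 y y0 y_neq0 y0_neq0)).
move=> /(attained_shear01 ((z - x / x0 * z0) / y)).
by rewrite !divfK // addrC subrK.
Qed.

End CornerValue.

End Image.

Theorem lemma3p3 (K : fieldType) (n m : nat) (p : ncpoly K m) :
  (4 <= n)%N -> (1 <= m)%N -> infinite_field K ->
  const_term p = 0%R -> has_ord p (n - 2) ->
  forall A : 'M[K]_n, in_image_T p A <-> upper_tri_t (n - 3) A.
Proof.
move=> le4n _ infK p0 [_ van nvan _].
have [k n_eq] : exists k, n = k.+4 by exists (n - 4)%N; lia.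
subst n.
rewrite !subSS !subn0 in van nvan * => A.
have [a [c c_neq0 [ua pa]]] := nonvanishing_delta p0 van nvan.
split; first exact: (in_image_band p0 van).
move=> bandA; have [M imM cornerM] := attained_all p0 van ua pa c_neq0 infK (corner A).
by rewrite (band_eq_corner bandA (in_image_band p0 van imM) (esym cornerM)).
Qed.
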